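(* Let $\bm{f}:\mathbb{R}^n\to\mathbb{R}^n$ be twice differentiable, let $\hat{\bm{y}}^n\in\mathbb{R}^n$, $s\ge1$ an integer, $\varepsilon\ge0$, and $\epsilon>0$ a constant. For $\Delta t>0$ consider the mixed-precision RKC step $$\hat{\bm{d}}_0=\bm{0},\quad \hat{\bm{d}}_1=\mu_1\Delta t\bm{f}(\hat{\bm{y}}^n),\quad \hat{\bm{d}}_j=\nu_j\hat{\bm{d}}_{j-1}+\kappa_j\hat{\bm{d}}_{j-2}+\mu_j\Delta t\big(\bm{f}(\hat{\bm{y}}^n)+\hat\Delta\bm{f}_{j-1}\big)+\gamma_j\Delta t\bm{f}(\hat{\bm{y}}^n),\ j=2,\dots,s,\quad \hat{\bm{y}}^{n+1}=\hat{\bm{y}}^n+\hat{\bm{d}}_s,$$ where $\hat\Delta\bm{f}_1,\dots,\hat\Delta\bm{f}_{s-1}\in\mathbb{R}^n$ are given vectors (which may depend on $\Delta t$ and on previous stages), and $\Delta\bm{f}_j:=\bm{f}(\hat{\bm{y}}^n+\hat{\bm{d}}_j)-\bm{f}(\hat{\bm{y}}^n)$. (a) If the coefficients are the order-$p$ RKC coefficients with $p=1$ or $p=2$ (with $s\ge2$ if $p=2$), and $\hat\Delta\bm{f}_j=\Delta\bm{f}_j+O(\epsilon\Delta t)$ as $\Delta t\to0$ for all $j$, then $$\hat{\bm{y}}^{n+1}=\hat{\bm{y}}^n+\Delta t\bm{f}(\hat{\bm{y}}^n)+O(\epsilon\Delta t^2+\Delta t^2)\quad\text{as }\Delta t\to0.$$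 (b) If the coefficients are the RKC coefficients with $p=2$ ($s\ge2$) and $\hat\Delta\bm{f}_j=\Delta\bm{f}_j+O(\Delta t^2)$ as $\Delta t\to0$ for all $j$, then $$\hat{\bm{y}}^{n+1}=\hat{\bm{y}}^n+\Delta t\bm{f}(\hat{\bm{y}}^n)+\tfrac12\Delta t^2\bm{f}'(\hat{\bm{y}}^n)\bm{f}(\hat{\bm{y}}^n)+O(\Delta t^3)\quad\text{as }\Delta t\to0.$$
   Context: All $O(\cdot)$ are as $\Delta t\to0$ with $\bm{f}$, $\hat{\bm{y}}^n$, $s$, $\varepsilon$, $\epsilon$ fixed. Chebyshev polynomials $T_0=1$, $T_1=x$, $T_j=2xT_{j-1}-T_{j-2}$. Order-$p$ RKC coefficients with $s$ stages and damping $\varepsilon$: $\omega_0=1+\varepsilon/s^2$. If $p=1$: $\omega_1=T_s(\omega_0)/T_s'(\omega_0)$, $b_j=1/T_j(\omega_0)$, $j=0,\dots,s$. If $p=2$: $\omega_1=T_s'(\omega_0)/T_s''(\omega_0)$, $b_j=T_j''(\omega_0)/T_j'(\omega_0)^2$ for $j=2,\dots,s$, $b_0=b_1=b_2$. Then $a_j=1-b_jT_j(\omega_0)$; $\mu_1=b_1\omega_1$; for $j=2,\dots,s$: $\mu_j=2\omega_1b_j/b_{j-1}$, $\nu_j=2\omega_0b_j/b_{j-1}$, $\kappa_j=-b_j/b_{j-2}$, $\gamma_j=-\mu_ja_{j-1}$. *)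

From HB Require Import structures.
From mathcomp Require Import all_boot all_order all_algebra.
From mathcomp Require Import all_classical all_reals all_analysis.
Set Implicit Arguments. Unset Strict Implicit. Unset Printing Implicit Defensive.
Import Order.TTheory GRing.Theory Num.Theory.
Import numFieldNormedType.Exports.
Local Open Scope ring_scope.

Fixpoint cheb (R : nzRingType) (j : nat) : {poly R} :=
  match j with
  | 0 => 1
  | 1 => 'X
  | (m.+1 as k).+1 => 2%:R *: 'X * cheb R k - cheb R m
  end.

Section RKC.
Variables (R : realType) (p s : nat) (eps : R).

Definition T (j : nat) (x : R) : R := (cheb R j).[x].
Definition T' (j : nat) (x : R) : R := ((cheb R j)^`()).[x].
Definition T'' (j : nat) (x : R) : R := ((cheb R j)^`(2)).[x].

Definition w0 : R := 1 + eps / (s%:R ^+ 2).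
(* order-p RKC coefficients (p = 1, or p = 2 for any other value of p) *)
Definition w1 : R :=
  if p == 1%N then T s w0 / T' s w0 else T' s w0 / T'' s w0.
Definition bcoef (j : nat) : R :=
  if p == 1%N then 1 / T j w0
  else let j' := maxn j 2 in T'' j' w0 / (T' j' w0) ^+ 2.
Definition acoef (j : nat) : R := 1 - bcoef j * T j w0.
Definition mu1 : R := bcoef 1 * w1.
Definition mu (j : nat) : R := 2 * w1 * bcoef j / bcoef j.-1.
Definition nu (j : nat) : R := 2 * w0 * bcoef j / bcoef j.-1.
Definition kappa (j : nat) : R := - (bcoef j / bcoef j.-2).
Definition gamma (j : nat) : R := - (mu j * acoef j.-1).

Variables (n : nat) (f : 'rV[R]_n -> 'rV[R]_n) (y : 'rV[R]_n)
  (dfhat : nat -> R -> 'rV[R]_n) (dt : R).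

Definition rkc_stage (j : nat) (dm2 dm1 : 'rV[R]_n) : 'rV[R]_n :=
  nu j *: dm1 + kappa j *: dm2 + (mu j * dt) *: (f y + dfhat j.-1 dt)
  + (gamma j * dt) *: f y.

(* (d_k, d_{k+1}) *)
Fixpoint rkc_pair (k : nat) : 'rV[R]_n * 'rV[R]_n :=
  match k with
  | 0 => (0, (mu1 * dt) *: f y)
  | k'.+1 => let (a, b) := rkc_pair k' in (b, rkc_stage k.+1 a b)
  end.

Definition rkc_d (j : nat) : 'rV[R]_n := (rkc_pair j).1.
Definition Delta_f (j : nat) : 'rV[R]_n := f (y + rkc_d j) - f y.
Definition rkc_step : 'rV[R]_n := y + rkc_d s.
End RKC.

From HB Require Import structures.
From mathcomp Require Import all_boot all_order all_algebra.
From mathcomp Require Import all_classical all_reals all_analysis.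
From mathcomp Require Import ring lra zify.
Import Order.TTheory GRing.Theory Num.Theory.
Import numFieldNormedType.Exports.
Local Open Scope ring_scope.

Set Implicit Arguments. Unset Strict Implicit. Unset Printing Implicit Defensive.

(* Differentiating the Chebyshev recurrence once and twice shows that
   c_j = b_j T_j'(w0) w1 and e_j = b_j w1^2 T_j''(w0) / 2 satisfy the same
   recurrence, with forcing terms mu_j + gamma_j and mu_j c_(j-1), and the
   choice of w1 and b_s gives c_s = 1 and, for p = 2, e_s = 1/2.  A two-step
   induction on j then yields d_j = c_j dt f(y) + O(dt^2) and, under the
   sharper hypothesis, d_j = c_j dt f(y) + e_j dt^2 f'(y) f(y) + O(dt^3):
   as d_j = O(dt) and Df_j = f'(y) d_j + O(|d_j|^2), the perturbation
   mu_j dt hat Df_(j-1) contributes mu_j c_(j-1) dt^2 f'(y) f(y) + O(dt^3).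
   In (a) the constant epsilon is fixed, so O(epsilon dt) is just O(dt). *)

Lemma nat_ind2 (P : nat -> Prop) :
  P 0 -> P 1 -> (forall k, P k -> P k.+1 -> P k.+2) -> forall k, P k.
Proof.
move=> P0 P1 PSS k; suff [] : P k /\ P k.+1 by [].
by elim: k => [|k [Pk Pk1]]; split; try apply: PSS.
Qed.

Section Chebyshev.
Variable R : realType.
Implicit Types (x : R) (k : nat).

Lemma T0 x : T 0 x = 1. Proof. by rewrite /T /= hornerE. Qed.
Lemma T1 x : T 1 x = x. Proof. by rewrite /T /= hornerE. Qed.
Lemma T'0 x : T' 0 x = 0. Proof. by rewrite /T' /= derivC hornerE. Qed.
Lemma T'1 x : T' 1 x = 1. Proof. by rewrite /T' /= derivX hornerE. Qed.
Lemma T''0 x : T'' 0 x = 0. Proof. by rewrite /T'' /derivn /= derivC deriv0 hornerE. Qed.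
Lemma T''1 x : T'' 1 x = 0. Proof. by rewrite /T'' /derivn /= derivX derivC hornerE. Qed.

Lemma TSS k x : T k.+2 x = 2 * x * T k.+1 x - T k x.
Proof. by rewrite /T /= !hornerE. Qed.

Lemma dchebSS k : (cheb R k.+2)^`() =
  2%:R *: cheb R k.+1 + 2%:R *: 'X * (cheb R k.+1)^`() - (cheb R k)^`().
Proof. by rewrite /= derivB derivM derivZ derivX -!scalerAl mul1r. Qed.

Lemma T'SS k x : T' k.+2 x = 2 * T k.+1 x + 2 * x * T' k.+1 x - T' k x.
Proof. by rewrite /T' /T dchebSS !hornerE. Qed.

Lemma T''SS k x : T'' k.+2 x = 4 * T' k.+1 x + 2 * x * T'' k.+1 x - T'' k x.
Proof.
rewrite /T'' /T' !derivnS !derivn0 dchebSS derivB derivD derivM !derivZ derivX.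
(* [ring] needs [/=] to fold the additions; [set] keeps [/=] from unfolding [cheb]. *)
by rewrite !hornerE; set u := cheb R k.+1; rewrite /=; ring.
Qed.

Lemma cheb_nondecreasing x : 1 <= x -> forall k,
  [/\ 1 <= T k x <= T k.+1 x, 0 <= T' k x <= T' k.+1 x &
      0 <= T'' k x <= T'' k.+1 x].
Proof.
move=> x1; elim=> [|k [/andP[a1 a2] /andP[b1 b2] /andP[c1 c2]]].
  by rewrite T0 T1 T'0 T'1 T''0 T''1; split; apply/andP; split; lra.
split; apply/andP; split; rewrite ?TSS ?T'SS ?T''SS; nra.
Qed.

Lemma T_ge1 x k : 1 <= x -> 1 <= T k x.
Proof. by move=> x1; have [/andP[]] := cheb_nondecreasing x1 k. Qed.

Lemma T'_gt0 x k : 1 <= x -> (0 < k)%N -> 0 < T' k x.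
Proof.
move=> x1; case: k => [|[|k]] // _; first by rewrite T'1.
have [/andP[a1 a2] /andP[b1 b2] _] := cheb_nondecreasing x1 k.
rewrite T'SS; nra.
Qed.

Lemma T''_gt0 x k : 1 <= x -> (1 < k)%N -> 0 < T'' k x.
Proof.
move=> x1; case: k => [|[|k]] // _.
have [_ /andP[b1 b2] /andP[c1 c2]] := cheb_nondecreasing x1 k.
have := T'_gt0 x1 (ltn0Sn k); rewrite T''SS; nra.
Qed.
End Chebyshev.

Section Coefficients.
Variables (R : realType) (p s : nat) (eps : R).
Hypothesis eps_ge0 : 0 <= eps.
Local Notation w0 := (w0 s eps).
Local Notation w1 := (w1 p s eps).
Local Notation b := (bcoef p s eps).

Lemma w0_ge1 : 1 <= w0.
Proof. by rewrite /w0 lerDl divr_ge0 // exprn_ge0. Qed.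

Lemma bcoef_neq0 j : b j != 0.
Proof.
have x1 := w0_ge1; rewrite /bcoef; case: ifP => _.
  by rewrite div1r invr_eq0 gt_eqF // (lt_le_trans ltr01) // T_ge1.
have j2 : (1 < maxn j 2)%N by rewrite leq_maxr.
by rewrite gt_eqF // divr_gt0 ?exprn_gt0 ?T''_gt0 ?T'_gt0 // ltnW.
Qed.

(* [rkc_c j] and [rkc_e j] are the coefficients of [dt f(y)] and
   [dt^2 f'(y) f(y)] in the Taylor expansion of the stage [d_j]. *)
Definition rkc_c j := b j * T' j w0 * w1.
Definition rkc_e j := b j * w1 ^+ 2 * T'' j w0 / 2.

Lemma rkc_cSS j : rkc_c j.+2 = nu p s eps j.+2 * rkc_c j.+1
  + kappa p s eps j.+2 * rkc_c j + mu p s eps j.+2 + gamma p s eps j.+2.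
Proof.
rewrite /rkc_c /gamma /nu /kappa /mu /acoef /= T'SS.
by field; rewrite !bcoef_neq0.
Qed.

Lemma rkc_eSS j : rkc_e j.+2 = nu p s eps j.+2 * rkc_e j.+1
  + kappa p s eps j.+2 * rkc_e j + mu p s eps j.+2 * rkc_c j.+1.
Proof.
rewrite /rkc_c /rkc_e /nu /kappa /mu /= T''SS.
by field; rewrite !bcoef_neq0.
Qed.

Lemma rkc_c0 : rkc_c 0 = 0. Proof. by rewrite /rkc_c T'0 mulr0 mul0r. Qed.
Lemma rkc_c1 : rkc_c 1 = mu1 p s eps. Proof. by rewrite /rkc_c T'1 mulr1. Qed.
Lemma rkc_e0 : rkc_e 0 = 0. Proof. by rewrite /rkc_e T''0 mulr0 mul0r. Qed.
Lemma rkc_e1 : rkc_e 1 = 0. Proof. by rewrite /rkc_e T''1 mulr0 mul0r. Qed.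

Lemma rkc_c_last : (1 <= s)%N -> p = 1%N \/ (p = 2%N /\ (2 <= s)%N) ->
  rkc_c s = 1.
Proof.
have x1 := w0_ge1; rewrite /rkc_c /bcoef /w1 => s1 [->|[-> s2]] /=.
  have T'gt0 : 0 < T' s w0 := T'_gt0 x1 s1.
  have Tgt0 : 0 < T s w0 by apply: lt_le_trans ltr01 (T_ge1 s x1).
  by field; rewrite !gt_eqF.
have T'gt0 : 0 < T' s w0 := T'_gt0 x1 (ltnW s2).
have T''gt0 : 0 < T'' s w0 := T''_gt0 x1 s2.
by rewrite (maxn_idPl s2); field; rewrite !gt_eqF.
Qed.

Lemma rkc_e_last : (2 <= s)%N -> p = 2%N -> rkc_e s = 2^-1.
Proof.
have x1 := w0_ge1; rewrite /rkc_e /bcoef /w1 => s2 -> /=.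
have T'gt0 : 0 < T' s w0 := T'_gt0 x1 (ltnW s2).
have T''gt0 : 0 < T'' s w0 := T''_gt0 x1 s2.
by rewrite (maxn_idPl s2); field; rewrite !gt_eqF.
Qed.
End Coefficients.

Section BigOt.
Context {R : realType}.

Definition bigOt {V : normedModType R} (k : nat) (u : R -> V) :=
  exists C : R, \forall t \near at_right (0:R), `|u t| <= C * t ^+ k.

Lemma near0_right_lt1 : \forall t \near at_right (0:R), 0 < t < 1.
Proof.
by apply: filterS2 (nbhs_right_gt 0) (nbhs_right_lt (@ltr01 R)) => t -> ->.
Qed.

Lemma bigOt_ge0 {V : normedModType R} k (u : R -> V) : bigOt k u ->
  exists2 C : R, 0 <= C & \forall t \near at_right (0:R), `|u t| <= C * t ^+ k.
Proof.
move=> [C HC]; exists `|C|; first exact: normr_ge0.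
apply: filterS2 HC (nbhs_right_gt 0) => t Ht t0; apply: le_trans Ht _.
by rewrite ler_pM2r ?exprn_gt0 // ler_norm.
Qed.

Context {V : normedModType R}.
Implicit Types u v : R -> V.

Lemma eq_bigOt k u v : (forall t, 0 < t -> u t = v t) -> bigOt k u -> bigOt k v.
Proof.
move=> uv [C H]; exists C.
by apply: filterS2 H (nbhs_right_gt 0) => t h t0; rewrite -uv.
Qed.

Lemma bigOt0 k : bigOt k (fun _ => (0 : V)).
Proof. by exists 0; apply: nearW => t; rewrite normr0 mul0r. Qed.

Lemma bigOtD k u v : bigOt k u -> bigOt k v -> bigOt k (fun t => u t + v t).
Proof.
move=> [C1 H1] [C2 H2]; exists (C1 + C2).
apply: filterS2 H1 H2 => t h1 h2.
by apply: le_trans (ler_normD _ _) _; rewrite mulrDl lerD.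
Qed.

Lemma bigOtM k1 k2 (a : R -> R) u : bigOt k1 a -> bigOt k2 u ->
  bigOt (k1 + k2) (fun t => a t *: u t).
Proof.
move=> /bigOt_ge0 [C1 C10 H1] /bigOt_ge0 [C2 C20 H2]; exists (C1 * C2).
apply: filterS2 H1 H2 => t h1 h2.
by rewrite normrZ exprD mulrACA; apply: ler_pM.
Qed.

Lemma bigOtZ k (c : R) u : bigOt k u -> bigOt k (fun t => c *: u t).
Proof.
move=> /bigOt_ge0 [C C0 H]; exists (`|c| * C); apply: filterS H => t h.
by rewrite normrZ -mulrA; apply: ler_wpM2l.
Qed.

Lemma bigOtW k m u : (k <= m)%N -> bigOt m u -> bigOt k u.
Proof.
move=> km /bigOt_ge0 [C C0 H]; exists C.
apply: filterS2 H near0_right_lt1 => t h /andP[t0 t1].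
apply: le_trans h _; apply: ler_wpM2l => //.
exact: ler_wiXn2l (ltW t0) (ltW t1) _ _ km.
Qed.

Lemma bigOt_powZ k (v : V) : bigOt k (fun t : R => t ^+ k *: v).
Proof.
exists `|v|; apply: filterS (nbhs_right_gt 0) => t t0.
by rewrite normrZ ger0_norm 1?mulrC // exprn_ge0 // ltW.
Qed.

Lemma bigOt_linear_approx (c : R) (v : V) u :
  bigOt 2 (fun t => u t - (t * c) *: v) -> bigOt 1 u.
Proof.
move=> /(bigOtW (isT : (1 <= 2)%N)) /bigOtD /(_ (bigOt_powZ 1 (c *: v))).
by apply: eq_bigOt => t _; rewrite scalerA mulrC subrK.
Qed.

Lemma bigOt_eqO k u (c : R) : 0 < c ->
  bigOt k u <-> u =O_ (at_right (0:R)) (fun t => c * t ^+ k).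
Proof.
move=> c0; split.
  move=> /bigOt_ge0 [C C0 H]; apply/eqO_exP; exists ((C + 1) / c).
    by rewrite divr_gt0 // ltr_wpDl.
  apply: filterS2 H (nbhs_right_gt 0) => t h t0; apply: le_trans h _.
  rewrite ger0_norm ?mulr_ge0 ?exprn_ge0 ?ltW // mulrA divfK ?gt_eqF //.
  by rewrite ltr_pM2r ?exprn_gt0 // ltrDl.
move=> /eqO_exP [K K0 H]; exists (K * c).
apply: filterS2 H (nbhs_right_gt 0) => t h t0; apply: le_trans h _.
by rewrite -mulrA ger0_norm // mulr_ge0 ?exprn_ge0 ?ltW.
Qed.
End BigOt.

Lemma bigOt_mulr {R : realType} (c : R) : bigOt 1 (fun t : R => c * t).
Proof. by apply: eq_bigOt (bigOt_powZ 1 c) => t _; rewrite mulrC. Qed.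

Lemma bigOt_eqO1 {R : realType} {V : normedModType R} k (u : R -> V) :
  bigOt k u <-> u =O_ (at_right (0:R)) (fun t => t ^+ k).
Proof.
have -> : (fun t : R => t ^+ k) = (fun t => 1 * t ^+ k).
  by apply: funext => t; rewrite mul1r.
exact: bigOt_eqO.
Qed.

Section LocalBounds.
Context {R : realType} {V W : normedModType R}.

Definition bigO0 (m : nat) (g : V -> W) :=
  exists2 del : R, 0 < del &
    exists K : R, forall h, `|h| < del -> `|g h| <= K * `|h| ^+ m.

Lemma bigOt_comp m (g : V -> W) (d : R -> V) :
  bigO0 m g -> bigOt 1 d -> bigOt m (fun t => g (d t)).
Proof.
move=> [del del0 [K HK]] /bigOt_ge0 [C C0 H]; exists (`|K| * C ^+ m).
have delC : 0 < del / (C + 1) by rewrite divr_gt0 // ltr_wpDl.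
apply: filterS3 H (nbhs_right_gt 0) (nbhs_right_lt delC) => t h t0 tdel.
rewrite expr1 in h; rewrite ltr_pdivlMr ?ltr_wpDl // in tdel.
have dt_small : `|d t| < del by apply: le_lt_trans h _; nra.
apply: le_trans (HK _ dt_small) _.
apply: le_trans (_ : `|K| * `|d t| ^+ m <= _).
  by rewrite ler_wpM2r ?exprn_ge0 ?ler_norm.
rewrite -mulrA -exprMn; apply: ler_wpM2l => //.
by apply: lerXn2r; rewrite ?nnegrE // mulr_ge0 // ltW.
Qed.

Lemma bigOt_lipschitz (g : V -> W) (K : R) k (u : R -> V) :
  0 <= K -> (forall x, `|g x| <= K * `|x|) -> bigOt k u ->
  bigOt k (fun t => g (u t)).
Proof.
move=> K0 HK /bigOt_ge0 [C C0 H]; exists (K * C).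
apply: filterS H => t h; apply: le_trans (HK _) _.
by rewrite -mulrA; apply: ler_wpM2l.
Qed.

Lemma differentiable_increment_bigO0 (g : V -> W) y : differentiable g y ->
  bigO0 1 (fun h => g (y + h) - g y).
Proof.
move=> dg; have /eqaddoP /(_ _ ltr01) /nbhs_ballP [del del0 Hdel] :=
  diff_locally dg.
have [K K0 HK] := linear_lipschitz (diff_continuous dg).
exists del => //; exists (K + 1) => h hdel.
have /= rem : `|g (h + y) - (g y + 'd g y h)| <= 1 * `|h|.
  by apply: Hdel; rewrite -ball_normE /= sub0r normrN.
rewrite [h + y]addrC mul1r in rem; rewrite expr1 mulrDl mul1r.
have -> : g (y + h) - g y = (g (y + h) - (g y + 'd g y h)) + 'd g y h.
  by rewrite opprD addrA subrK.
by apply: le_trans (ler_normD _ _) _; rewrite addrC; apply: lerD.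
Qed.
End LocalBounds.

Section MatrixNorm.
Context {R : realType}.

Lemma mx_norm_entry_le m n (M : 'M[R]_(m, n)) i j : `|M i j| <= `|M|.
Proof.
rewrite [leRHS]/Num.Def.normr /= mx_normrE.
by apply: le_trans (le_bigmax _ _ (i, j)).
Qed.

Lemma mx_norm_le m n (M : 'M[R]_(m, n)) (r : R) :
  0 <= r -> (forall i j, `|M i j| <= r) -> `|M| <= r.
Proof.
move=> r0 H; rewrite [leLHS]/Num.Def.normr /= mx_normrE.
by apply: bigmax_le => // -[i j] _; exact: H.
Qed.

Lemma mulmx_norm_le k n m (A : 'M[R]_(k, n)) (B : 'M[R]_(n, m)) :
  `|A *m B| <= n%:R * `|A| * `|B|.
Proof.
apply: mx_norm_le => [|i j]; first by rewrite !mulr_ge0.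
rewrite mxE; apply: le_trans (ler_norm_sum _ _ _) _.
apply: le_trans (_ : \sum_(l < n) `|A| * `|B| <= _).
  by apply: ler_sum => l _; rewrite normrM; apply: ler_pM; rewrite ?mx_norm_entry_le.
by rewrite sumr_const card_ord -mulrA mulr_natl.
Qed.
End MatrixNorm.

Section Taylor.
Context {R : realType} {m n : nat} (f : 'rV[R]_m -> 'rV[R]_n).
Hypothesis df : forall x, differentiable f x.

Lemma derive1_line (y h : 'rV[R]_m) (t : R) :
  derivable (fun s : R => f (y + s *: h)) t 1 /\
  'D_1 (fun s : R => f (y + s *: h)) t = 'D_h f (y + t *: h).
Proof.
have E : (fun s : R => s^-1 *: (f (y + (s *: 1 + t) *: h) - f (y + t *: h)))
   = (fun s => s^-1 *: (f (s *: h + (y + t *: h)) - f (y + t *: h))).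
  apply: funext => s /=; congr (_ *: (f _ - _)).
  by rewrite [_%:A]mulr1 scalerDl addrCA addrA.
have := @diff_derivable _ _ _ f (y + t *: h) h (df _).
by rewrite /derivable /derive /= E.
Qed.

Lemma jacobian_mvt (y h : 'rV[R]_m) i : exists2 c : R, c \in `[0, 1] &
  (f (y + h) - f y) 0 i = (h *m jacobian f (y + c *: h)) 0 i.
Proof.
pose G s := f (y + s *: h) 0 i.
have dG t : derivable G t 1 /\ 'D_1 G t = (h *m jacobian f (y + t *: h)) 0 i.
  have [D1 D2] := derive1_line y h t.
  split; first exact: (derivable_mxP _ _ _).1 D1 0 i.
  by rewrite -deriveEjacobian // -D2 derive_mx // mxE.
have [c cI Hc] : exists2 c, c \in `[0, 1] & G 1 - G 0 = 'D_1 G c * (1 - 0).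
  apply: MVT_segment => //.
  - by move=> x _; apply: derivableP; exact: (dG x).1.
  - by apply: derivable_within_continuous => x _; exact: (dG x).1.
exists c => //.
have -> : (f (y + h) - f y) 0 i = G 1 - G 0.
  by rewrite /G scale1r scale0r addr0 !mxE.
by rewrite Hc subr0 mulr1 (dG c).2.
Qed.

Lemma taylor2_bigO0 y : differentiable (jacobian f) y ->
  bigO0 2 (fun h => f (y + h) - f y - 'd f y h).
Proof.
move=> dJ; have [del del0 [L HL]] := differentiable_increment_bigO0 dJ.
exists del => //; exists (m%:R * `|L|) => h hdel.
apply: mx_norm_le => [|i0 i]; first by rewrite !mulr_ge0 ?exprn_ge0.
have [c /[!in_itv] /andP[c0 c1] Hc] := jacobian_mvt y h i.
have -> : (f (y + h) - f y - 'd f y h) i0 i =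
    (h *m (jacobian f (y + c *: h) - jacobian f y)) 0 i.
  rewrite (ord1 i0) mulmxBr [RHS]mxE -Hc -deriveE // deriveEjacobian //.
  by rewrite [LHS]mxE.
apply: le_trans (mx_norm_entry_le _ 0 i) _.
apply: le_trans (mulmx_norm_le _ _) _.
have ch_le : `|c *: h| <= `|h| by rewrite normrZ ger0_norm // ler_piMl.
have HJ : `|jacobian f (y + c *: h) - jacobian f y| <= `|L| * `|h|.
  apply: le_trans (HL _ (le_lt_trans ch_le hdel)) _; rewrite expr1.
  apply: le_trans (ler_wpM2r (normr_ge0 _) (ler_norm L)) _.
  exact: ler_wpM2l.
apply: le_trans (ler_wpM2l _ HJ) _; first by rewrite mulr_ge0.
by rewrite expr2 mulrACA.
Qed.
End Taylor.

Section Stages.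
Context {R : realType} {n : nat} (f : 'rV[R]_n -> 'rV[R]_n) (y : 'rV[R]_n).
Context (s : nat) (eps : R) (p : nat) (dfhat : nat -> R -> 'rV[R]_n).
Hypothesis df : forall x, differentiable f x.
Hypothesis eps_ge0 : 0 <= eps.
Local Notation d t j := (rkc_d p s eps f y dfhat t j).
Local Notation Df t j := (Delta_f p s eps f y dfhat t j).
Local Notation c := (rkc_c p s eps).
Local Notation e := (rkc_e p s eps).
Local Notation nu := (nu p s eps).
Local Notation kappa := (kappa p s eps).
Local Notation mu := (mu p s eps).

Lemma rkc_dSS t j :
  d t j.+2 = rkc_stage p s eps f y dfhat t j.+2 (d t j) (d t j.+1).
Proof.
have dS i : d t i.+1 = (rkc_pair p s eps f y dfhat t i).2.
  by rewrite /rkc_d /=; case: rkc_pair.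
by rewrite dS dS /rkc_d /=; case: rkc_pair.
Qed.

Lemma rkc_d_defect1SS t k :
  d t k.+2 - (t * c k.+2) *: f y =
  nu k.+2 *: (d t k.+1 - (t * c k.+1) *: f y)
  + kappa k.+2 *: (d t k - (t * c k) *: f y) + (mu k.+2 * t) *: dfhat k.+1 t.
Proof.
rewrite rkc_dSS /rkc_stage rkc_cSS //=.
by apply/rowP => i; rewrite !mxE; ring.
Qed.

Lemma rkc_d_defect2SS t k (v : 'rV[R]_n) :
  d t k.+2 - (t * c k.+2) *: f y - (t ^+ 2 * e k.+2) *: v =
  nu k.+2 *: (d t k.+1 - (t * c k.+1) *: f y - (t ^+ 2 * e k.+1) *: v)
  + kappa k.+2 *: (d t k - (t * c k) *: f y - (t ^+ 2 * e k) *: v)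
  + (mu k.+2 * t) *: (dfhat k.+1 t - (t * c k.+1) *: v).
Proof.
rewrite rkc_d_defect1SS rkc_eSS //.
by apply/rowP => i; rewrite !mxE; ring.
Qed.

Lemma rkc_d_first_order :
  (forall j, (1 <= j <= s.-1)%N -> bigOt 1 (fun t => dfhat j t - Df t j)) ->
  forall j, (j <= s)%N -> bigOt 2 (fun t => d t j - (t * c j) *: f y).
Proof.
move=> Hdf; apply: nat_ind2 => [_|_|k IH0 IH1 ks].
- by apply: eq_bigOt (bigOt0 2) => t _; rewrite rkc_c0 mulr0 scale0r subr0.
- by apply: eq_bigOt (bigOt0 2) => t _; rewrite rkc_c1 /rkc_d /= mulrC subrr.
have {IH0}R0 := IH0 (ltnW (ltnW ks)); have {IH1}R1 := IH1 (ltnW ks).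
have Df1 : bigOt 1 (fun t => Df t k.+1).
  exact: bigOt_comp (differentiable_increment_bigO0 (df y))
                    (bigOt_linear_approx R1).
have dfhat1 : bigOt 1 (dfhat k.+1).
  apply: eq_bigOt (bigOtD (Hdf k.+1 _) Df1) => [t _|]; first by rewrite subrK.
  lia.
apply: eq_bigOt (bigOtD (bigOtD (bigOtZ (nu k.+2) R1) (bigOtZ (kappa k.+2) R0))
                  (bigOtM (bigOt_mulr (mu k.+2)) dfhat1)) => t _.
exact/esym/rkc_d_defect1SS.
Qed.

Lemma rkc_d_second_order : differentiable (jacobian f) y ->
  (forall j, (1 <= j <= s.-1)%N -> bigOt 2 (fun t => dfhat j t - Df t j)) ->
  forall j, (j <= s)%N -> bigOt 3
    (fun t => d t j - (t * c j) *: f y - (t ^+ 2 * e j) *: 'd f y (f y)).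
Proof.
move=> dJ Hdf; have [K K0 HK] := linear_lipschitz (diff_continuous (df y)).
apply: nat_ind2 => [_|_|k IH0 IH1 ks].
- apply: eq_bigOt (bigOt0 3) => t _.
  by rewrite rkc_c0 rkc_e0 !mulr0 !scale0r !subr0.
- apply: eq_bigOt (bigOt0 3) => t _.
  by rewrite rkc_c1 rkc_e1 mulr0 scale0r subr0 /rkc_d /= mulrC subrr.
have {IH0}R0 := IH0 (ltnW (ltnW ks)); have {IH1}R1 := IH1 (ltnW ks).
have R1' : bigOt 2 (fun t => d t k.+1 - (t * c k.+1) *: f y).
  apply: eq_bigOt (bigOtD (bigOtW (isT : (2 <= 3)%N) R1)
                          (bigOt_powZ 2 (e k.+1 *: 'd f y (f y)))) => t _.
  by rewrite scalerA subrK.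
have taylor : bigOt 2 (fun t => Df t k.+1 - 'd f y (d t k.+1)).
  exact: bigOt_comp (taylor2_bigO0 df dJ) (bigOt_linear_approx R1').
have lin : bigOt 2 (fun t => 'd f y (d t k.+1) - (t * c k.+1) *: 'd f y (f y)).
  apply: eq_bigOt (bigOt_lipschitz (ltW K0) HK R1') => t _.
  by rewrite linearB linearZ.
have dfhat1 : bigOt 2 (fun t => dfhat k.+1 t - (t * c k.+1) *: 'd f y (f y)).
  apply: eq_bigOt (bigOtD (bigOtD (Hdf k.+1 _) taylor) lin) => [t _|].
    by apply/rowP => i; rewrite !mxE; ring.
  lia.
apply: eq_bigOt (bigOtD (bigOtD (bigOtZ (nu k.+2) R1) (bigOtZ (kappa k.+2) R0))
                  (bigOtM (bigOt_mulr (mu k.+2)) dfhat1)) => t _.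
exact/esym/rkc_d_defect2SS.
Qed.
End Stages.

Theorem theorem3p1 (R : realType) (n : nat) (f : 'rV[R]_n -> 'rV[R]_n)
  (y : 'rV[R]_n) (s : nat) (eps epsc : R) :
  (forall x, differentiable f x) ->
  (forall x, differentiable (jacobian f) x) ->
  (1 <= s)%N -> 0 <= eps -> 0 < epsc ->
  (* (a) *)
  (forall (p : nat), (p = 1%N \/ (p = 2%N /\ (2 <= s)%N)) ->
   forall dfhat : nat -> R -> 'rV[R]_n,
   (forall j : nat, (1 <= j <= s.-1)%N ->
      (fun dt => dfhat j dt - Delta_f p s eps f y dfhat dt j)
        =O_ (at_right (0:R)) (fun dt => epsc * dt)) ->
   (fun dt => rkc_step p s eps f y dfhat dt - y - dt *: f y)
     =O_ (at_right (0:R)) (fun dt => epsc * dt ^+ 2 + dt ^+ 2))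
  /\
  (* (b) *)
  ((2 <= s)%N ->
   forall dfhat : nat -> R -> 'rV[R]_n,
   (forall j : nat, (1 <= j <= s.-1)%N ->
      (fun dt => dfhat j dt - Delta_f 2 s eps f y dfhat dt j)
        =O_ (at_right (0:R)) (fun dt => dt ^+ 2)) ->
   (fun dt => rkc_step 2 s eps f y dfhat dt - y - dt *: f y
                - (2^-1 * dt ^+ 2) *: 'd f y (f y))
     =O_ (at_right (0:R)) (fun dt => dt ^+ 3)).
Proof.
move=> df dJ s1 eps0 epsc0; split=> [p hp dfhat Hdf | s2 dfhat Hdf].
  have := rkc_d_first_order df eps0 (fun j hj => (bigOt_eqO 1 _ epsc0).2 (Hdf j hj)).
  move=> /(_ s (leqnn s)); rewrite rkc_c_last // => Hs.
  have -> : (fun t : R => epsc * t ^+ 2 + t ^+ 2) = (fun t => (epsc + 1) * t ^+ 2).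
    by apply: funext => t; rewrite mulrDl mul1r.
  apply/bigOt_eqO; first by rewrite ltr_wpDl // ltW.
  by apply: eq_bigOt Hs => t _; rewrite /rkc_step mulr1 (addrC y) addrK.
have := rkc_d_second_order df eps0 (dJ y) (fun j hj => (bigOt_eqO1 2 _).2 (Hdf j hj)).
move=> /(_ s (leqnn s)); rewrite rkc_c_last ?rkc_e_last //; last by right.
move=> Hs; apply/bigOt_eqO1.
by apply: eq_bigOt Hs => t _; rewrite /rkc_step mulr1 (addrC y) addrK mulrC.
Qed.
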